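(* Let $(\mathcal{X},c)$ be a metric space with diameter at most $1$, let $\mu,\nu$ be probability distributions on $\mathcal{X}$, and let $p\ge1$. Then $\mathrm{RPW}_{p,0}(\mu,\nu)=\|\mu-\nu\|_{\mathrm{TV}}$.
   Context: $c(x,y)\le 1$ for all $x,y$; distributions are Borel probability measures. For $p\in[1,\infty)$ and $\alpha\in[0,1]$, a partial transport plan of mass $\alpha$ between $\mu,\nu$ is a nonnegative measure $\gamma$ on $\mathcal{X}\times\mathcal{X}$ of total mass $\alpha$ with first marginal $\le\mu$ and second marginal $\le\nu$ (setwise); its cost is $w_p(\gamma)=(\int c^p\,d\gamma)^{1/p}$, and $W_{p,\alpha}(\mu,\nu)$ is the infimum of $w_p(\gamma)$ over such $\gamma$. For $k\ge0$, $\mathrm{RPW}_{p,k}(\mu,\nu)=\inf\{\varepsilon\in[0,1]: W_{p,1-\varepsilon}(\mu,\nu)\le k\varepsilon\}$. $\|\mu-\nu\|_{\mathrm{TV}}=\sup_A|\mu(A)-\nu(A)|$ is the total variation distance. *)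

From HB Require Import structures.
From mathcomp Require Import all_boot all_order all_algebra.
From mathcomp Require Import all_classical all_reals all_analysis.
Set Implicit Arguments. Unset Strict Implicit. Unset Printing Implicit Defensive.
Import Order.TTheory GRing.Theory Num.Theory.
Local Open Scope classical_set_scope.
Local Open Scope ring_scope.

Section RPW.
Context {R : realType} {X : pointedType} (c : X -> X -> R).

Definition is_metric : Prop :=
  [/\ forall x y, c x y = 0 <-> x = y,
      forall x y, c x y = c y x &
      forall x y z, c x z <= c x y + c y z].

Definition c_open (U : set X) : Prop :=
  forall x, U x -> exists2 r : R, 0 < r & [set y | c x y < r] `<=` U.

Definition c_open2 (U : set (X * X)) : Prop :=
  forall z, U z -> exists2 r : R, 0 < r &
    [set y | c z.1 y < r] `*` [set y | c z.2 y < r] `<=` U.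

Definition BX := g_sigma_algebraType c_open.
Definition BXX := g_sigma_algebraType c_open2.

Definition partial_plan (mu nu : {measure set BX -> \bar R})
  (alpha : R) (gam : {measure set BXX -> \bar R}) : Prop :=
  [/\ gam setT = alpha%:E,
      forall A : set BX, measurable A -> gam (A `*` setT) <= mu A &
      forall A : set BX, measurable A -> gam (setT `*` A) <= nu A]%E.

Definition wp (p : R) (gam : {measure set BXX -> \bar R}) : \bar R :=
  poweR (\int[gam]_z ((c z.1 z.2) `^ p)%:E)%E p^-1.

Definition Wpa (p alpha : R) (mu nu : {measure set BX -> \bar R}) : \bar R :=
  ereal_inf [set wp p gam | gam in partial_plan mu nu alpha].

Definition RPW (p k : R) (mu nu : {measure set BX -> \bar R}) : R :=
  inf [set eps : R | 0 <= eps <= 1 /\ (Wpa p (1 - eps) mu nu <= (k * eps)%:E)%E].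

Definition TV (mu nu : {measure set BX -> \bar R}) : R :=
  sup [set `|fine (mu A) - fine (nu A)| | A in (@measurable _ BX)].

End RPW.
Arguments Wpa {R X} c p alpha mu nu.
Arguments RPW {R X} c p k mu nu.
Arguments TV {R X} c mu nu.
Arguments partial_plan {R X} c mu nu alpha gam.
Arguments wp {R X} c p gam.

(* With k = 0 the condition W_{p,1-eps}(mu, nu) <= 0 says that mass 1 - eps can be
   transported at arbitrarily small cost.  For a Hahn decomposition P, N of
   mu - nu, keeping nu|_P + mu|_N in place is a plan of cost 0 and mass
   1 - (mu P - nu P), and mu P - nu P is one of the values whose supremum is the
   TV distance.  Conversely, given cheap plans of mass 1 - eps and a Borel set A,
   take a closed F inside A with mu (A \ F) small (finite Borel measures on a
   metric space are inner regular) and a thin neighbourhood F_t of F with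
   nu (F_t \ F) small; by Markov's inequality the plan moves little mass over a
   distance >= t, so every pair of the plan has its first point outside F or its
   second point in F_t, whence 1 - eps <= mu (~ F) + nu F_t + small and
   mu A - nu A <= eps. *)

From HB Require Import structures.
From mathcomp Require Import all_boot all_order all_algebra.
From mathcomp Require Import all_classical all_reals all_analysis.
From mathcomp Require Import lra measurable_realfun.
Import Order.TTheory GRing.Theory Num.Theory.
Local Open Scope classical_set_scope.
Local Open Scope ring_scope.

Set Implicit Arguments. Unset Strict Implicit. Unset Printing Implicit Defensive.

Section measure_facts.
Context d (T : measurableType d) (R : realType).

Lemma nonincreasing_measure_small (m : {finite_measure set T -> \bar R})
    (G : nat -> set T) :
  (forall n, measurable (G n)) -> (forall n k, (n <= k)%N -> G k `<=` G n) ->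
  \bigcap_n G n = set0 -> forall e : R, 0 < e -> exists n, (m (G n) <= e%:E)%E.
Proof.
move=> mG hG G0 e e0.
have : (m \o G) n @[n --> \oo] --> m (\bigcap_n G n).
  apply: nonincreasing_cvg_mu => //.
  - by rewrite ltey_eq fin_num_measure.
  - exact: bigcapT_measurable.
  - by move=> n k nk; apply/subsetPset; exact: hG.
rewrite G0 measure0 => /fine_cvgP[_ /cvgr0_norm_lt/(_ e e0)[n _ hn]].
exists n; rewrite -[m (G n)]fineK ?fin_num_measure // lee_fin.
exact: le_trans (ler_norm _) (ltW (hn n (leqnn n))).
Qed.

Lemma measure_bigcup_tail_small (m : {finite_measure set T -> \bar R})
    (A : nat -> set T) : (forall n, measurable (A n)) ->
  forall e : R, 0 < e ->
  exists N, (m (\bigcup_n A n `\` \bigcup_(k < N) A k) <= e%:E)%E.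
Proof.
move=> mA; apply: nonincreasing_measure_small.
- move=> N; apply: measurableD; first exact: bigcupT_measurable.
  by rewrite bigcup_mkord; apply: bigsetU_measurable.
- move=> n k nk x [Ax nAx]; split => // -[j /= jn Ajx]; apply: nAx.
  by exists j => //=; exact: leq_trans jn nk.
- apply/seteqP; split => // x /= hx; have [[j _ Ajx] _] := hx 0%N I.
  by have [_] := hx j.+1 I; apply; exists j => /=.
Qed.

Lemma measure_le_geometric_cover (m : {measure set T -> \bar R}) (B : set T)
    (G : nat -> set T) (e : R) : 0 <= e -> measurable B ->
  (forall n, measurable (G n)) -> B `<=` \bigcup_n G n ->
  (forall n, m (G n) <= (e / (2 ^ n.+1)%:R)%:E)%E -> (m B <= e%:E)%E.
Proof.
move=> e0 mB mG BG hG.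
apply: le_trans (measure_sigma_subadditive m mG mB BG) _.
apply: le_trans (_ : (\sum_(0 <= n <oo) (0 + (e / (2 ^ n.+1)%:R)%:E) <= _)%E).
  by apply: lee_nneseries => // n _; rewrite add0e.
by apply: le_trans (epsilon_trick _ _ _) _ => //; rewrite eseries0 // add0e.
Qed.

Lemma fine_measure_setD (m : {finite_measure set T -> \bar R}) (A B : set T) :
  measurable A -> measurable B -> B `<=` A ->
  fine (m A) = fine (m B) + fine (m (A `\` B)).
Proof.
move=> mA mB BA; rewrite -fineD ?fin_num_measure //; last exact: measurableD.
by rewrite -measureU ?setDUK //; [exact: measurableD | rewrite setDE setICA setICr setI0].
Qed.

Lemma fine_probabilityC (m : probability T R) (A : set T) :
  measurable A -> fine (m (~` A)) = 1 - fine (m A).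
Proof.
move=> mA.
have : m (A `|` ~` A) = (m A + m (~` A))%E := measureU m mA (measurableC mA) (setICr A).
rewrite setUv probability_setT => h.
apply/eqP; rewrite eq_sym subr_eq addrC -fineD ?fin_num_measure //; last exact: measurableC.
by rewrite -h.
Qed.

Lemma fine_probability_le1 (m : probability T R) (A : set T) :
  measurable A -> fine (m A) <= 1.
Proof.
by move=> mA; rewrite -lee_fin fineK ?fin_num_measure // probability_le1.
Qed.

End measure_facts.

Section metric.
Context {R : realType} {X : pointedType} (c : X -> X -> R) (hc : is_metric c).

Lemma metric_xx x : c x x = 0.
Proof. by case: hc => h _ _; apply/h. Qed.

Lemma metric_sym x y : c x y = c y x.
Proof. by case: hc. Qed.

Lemma metric_triangle x y z : c x z <= c x y + c y z.
Proof. by case: hc. Qed.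

Lemma metric_ge0 x y : 0 <= c x y.
Proof.
have := metric_triangle x y x; rewrite metric_xx (metric_sym y x) -mulr2n => h.
by rewrite -(@pmulrn_lge0 _ _ 2).
Qed.

End metric.

Section borel_measurability.
Context {R : realType} {X : pointedType} (c : X -> X -> R).

Lemma c_open_measurable (U : set X) : c_open c U -> measurable (U : set (BX c)).
Proof. exact: sub_sigma_algebra. Qed.

Lemma c_open2_measurable (U : set (X * X)) :
  c_open2 c U -> measurable (U : set (BXX c)).
Proof. exact: sub_sigma_algebra. Qed.

Lemma measurable_fst_BX : measurable_fun setT (fst : BXX c -> BX c).
Proof.
apply: (@measurability _ _ _ (BX c) setT _ (c_open c) erefl) => _ [B oB <-].
apply: c_open2_measurable; rewrite setTI => z /= /oB[r r0 hr].
by exists r => // y [/= /hr].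
Qed.

Lemma measurable_snd_BX : measurable_fun setT (snd : BXX c -> BX c).
Proof.
apply: (@measurability _ _ _ (BX c) setT _ (c_open c) erefl) => _ [B oB <-].
apply: c_open2_measurable; rewrite setTI => z /= /oB[r r0 hr].
by exists r => // y [_ /= /hr].
Qed.

Lemma measurable_setXT_BX (A : set (BX c)) :
  measurable A -> measurable (A `*` setT : set (BXX c)).
Proof.
move=> mA; rewrite (_ : _ `*` _ = fst @^-1` A); last first.
  by apply/seteqP; split => -[x y] //= [].
by rewrite -[X in measurable X]setTI; exact: measurable_fst_BX.
Qed.

Lemma measurable_setTX_BX (A : set (BX c)) :
  measurable A -> measurable (setT `*` A : set (BXX c)).
Proof.
move=> mA; rewrite (_ : _ `*` _ = snd @^-1` A); last first.
  by apply/seteqP; split => -[x y] //= [].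
by rewrite -[X in measurable X]setTI; exact: measurable_snd_BX.
Qed.

Lemma measurable_diag_BX :
  measurable_fun setT ((fun x => (x, x)) : BX c -> BXX c).
Proof.
apply: (@measurability _ _ _ (BXX c) setT _ (c_open2 c) erefl) => _ [B oB <-].
apply: c_open_measurable; rewrite setTI => x /= /oB[r r0 hr].
by exists r => // y /= h; exact: hr.
Qed.

Hypothesis hc : is_metric c.

Lemma measurable_cost : measurable_fun setT (fun z : BXX c => c z.1 z.2).
Proof.
apply: (measurability _ (RGenOInfty.measurableE R)) => _ [_ [a ->] <-].
apply: c_open2_measurable; rewrite setTI => z /=.
rewrite in_itv /= andbT => az.
exists ((c z.1 z.2 - a) / 2); first by rewrite divr_gt0 // subr_gt0.
move=> [y1 y2] [/= h1 h2]; rewrite /= in_itv /= andbT.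
have := metric_triangle hc z.1 y1 z.2; have := metric_triangle hc y1 y2 z.2.
rewrite (metric_sym hc y2); lra.
Qed.

Lemma measurable_cost_ge (t : R) :
  measurable ([set z | t <= c z.1 z.2] : set (BXX c)).
Proof.
rewrite -[X in measurable X]setTI.
have -> : [set z : BXX c | t <= c z.1 z.2] = (fun z => c z.1 z.2) @^-1` `[t, +oo[.
  by apply/seteqP; split => z /=; rewrite in_itv /= andbT.
exact: measurable_cost.
Qed.

Lemma measurable_cost_powR (p : R) :
  measurable_fun setT (fun z : BXX c => (c z.1 z.2 `^ p)%:E).
Proof.
apply/measurable_EFinP; apply: (measurableT_comp (measurable_powR p)).
exact: measurable_cost.
Qed.

End borel_measurability.

Section closed_sets.
Context {R : realType} {X : pointedType} (c : X -> X -> R).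

Definition c_closed (F : set X) := c_open c (~` F).

Definition c_thicken (F : set X) (r : R) := [set y | exists2 x, F x & c x y < r].

Lemma c_closed_measurable (F : set X) :
  c_closed F -> measurable (F : set (BX c)).
Proof. by move=> cF; rewrite -[F]setCK; apply: measurableC; exact: c_open_measurable. Qed.

Lemma c_closed0 : c_closed set0.
Proof. by rewrite /c_closed setC0 => x _; exists 1. Qed.

Lemma c_closedT : c_closed setT.
Proof. by rewrite /c_closed setCT. Qed.

Lemma c_closedU (F G : set X) : c_closed F -> c_closed G -> c_closed (F `|` G).
Proof.
move=> cF cG; rewrite /c_closed setCU => x [/cF[r1 r10 h1] /cG[r2 r20 h2]].
exists (Num.min r1 r2); first by rewrite lt_min r10 r20.
by move=> y /=; rewrite lt_min => /andP[/h1 ? /h2 ?].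
Qed.

Lemma c_closed_bigcup_ord (F : nat -> set X) (n : nat) :
  (forall k, c_closed (F k)) -> c_closed (\bigcup_(k < n) F k).
Proof.
move=> cF; rewrite bigcup_mkord; elim: n => [|n IH].
  by rewrite big_ord0; exact: c_closed0.
by rewrite big_ord_recr /=; apply: c_closedU.
Qed.

Lemma c_closed_bigcap (F : nat -> set X) :
  (forall n, c_closed (F n)) -> c_closed (\bigcap_n F n).
Proof.
move=> cF; rewrite /c_closed setC_bigcap => x [n _ /cF[r r0 h]].
by exists r => // y /h; exists n.
Qed.

Lemma c_thicken_le (F : set X) (r s : R) : r <= s -> c_thicken F r `<=` c_thicken F s.
Proof. by move=> rs y [x Fx xy]; exists x => //; exact: lt_le_trans xy rs. Qed.

Hypothesis hc : is_metric c.

Lemma c_thicken_open (F : set X) (r : R) : c_open c (c_thicken F r).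
Proof.
move=> y [x Fx hxy]; exists (r - c x y); first by rewrite subr_gt0.
move=> z /=; rewrite ltrBrDl => hz; exists x => //.
exact: le_lt_trans (metric_triangle hc x y z) hz.
Qed.

Lemma c_thicken_sub (F : set X) (r : R) : 0 < r -> F `<=` c_thicken F r.
Proof. by move=> r0 x Fx; exists x => //; rewrite (metric_xx hc). Qed.

Lemma c_closed_bigcap_thicken (F : set X) :
  c_closed F -> \bigcap_n c_thicken F n.+1%:R^-1 `<=` F.
Proof.
move=> cF y Fny; apply: contrapT => /cF[r r0 hr].
have [n nr] : exists n, n.+1%:R^-1 < r.
  exists (Num.truncn r^-1).
  by rewrite -ltf_pV2 ?(posrE, divr_gt0) // invrK truncnS_gt.
have [x Fx xy] := Fny n I.
suff : (~` F) x by [].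
by apply: hr; rewrite /= (metric_sym hc); exact: lt_trans xy nr.
Qed.

End closed_sets.

Section inner_regularity.
Context {R : realType} {X : pointedType} (c : X -> X -> R) (hc : is_metric c).
Variable m : {finite_measure set BX c -> \bar R}.

Lemma c_thicken_setD_small (F : set X) : c_closed c F ->
  forall e : R, 0 < e ->
  exists n, (m (c_thicken c F n.+1%:R^-1 `\` F) <= e%:E)%E.
Proof.
move=> cF; apply: nonincreasing_measure_small.
- move=> n; apply: measurableD; last exact: c_closed_measurable.
  by apply: c_open_measurable; exact: c_thicken_open.
- move=> n k nk; apply: setSD; apply: c_thicken_le.
  by rewrite lef_pV2 ?posrE // ler_nat ltnS.
- apply/seteqP; split => // y /= hy; have [_] := hy 0%N I; apply.
  by apply: (c_closed_bigcap_thicken hc cF) => n _; have [] := hy n I.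
Qed.

Definition inner_regular (A : set (BX c)) := forall e : R, 0 < e ->
  exists F, [/\ c_closed c F, F `<=` A & (m (A `\` F) <= e%:E)%E].

Lemma inner_regular_closed (F : set X) : c_closed c F -> inner_regular F.
Proof. by move=> cF e e0; exists F; split => //; rewrite setDv measure0 lee_fin ltW. Qed.

Lemma inner_regular_open (U : set X) : c_open c U -> inner_regular U.
Proof.
move=> oU e /(@c_thicken_setD_small (~` U)) [|n hn]; first by rewrite /c_closed setCK.
exists (~` c_thicken c (~` U) n.+1%:R^-1); split.
- by rewrite /c_closed setCK; exact: c_thicken_open.
- by move=> x nTx; apply: contrapT => Ux; apply: nTx; exact: c_thicken_sub.
- by move: hn; rewrite !setDE !setCK setIC.
Qed.

Lemma inner_regular_bigcup (A : nat -> set (BX c)) :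
  (forall n, measurable (A n)) -> (forall n, inner_regular (A n)) ->
  inner_regular (\bigcup_n A n).
Proof.
move=> mA iA e e0; have e20 : 0 < e / 2 by rewrite divr_gt0.
have /choice[F hF] : forall n, exists F, [/\ c_closed c F, F `<=` A n &
    (m (A n `\` F) <= (e / 2 / (2 ^ n.+1)%:R)%:E)%E].
  by move=> n; apply: iA; rewrite divr_gt0 // ltr0n expn_gt0.
have cF n : c_closed c (F n) by case: (hF n).
have mF n : measurable (F n : set (BX c)) by exact: c_closed_measurable.
have [N hN] := measure_bigcup_tail_small m mA e20.
exists (\bigcup_(k < N) F k); split.
- exact: c_closed_bigcup_ord.
- by move=> x [k _ Fkx]; exists k => //; case: (hF k) => _ /(_ x Fkx).
have mUA : measurable (\bigcup_n A n) by exact: bigcupT_measurable.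
have mAN : measurable (\bigcup_(k < N) A k : set (BX c)).
  by rewrite bigcup_mkord; exact: bigsetU_measurable.
have mD n : measurable (A n `\` F n) by exact: measurableD.
have mUD : measurable (\bigcup_n (A n `\` F n)) by exact: bigcupT_measurable.
apply: (@le_trans _ _ (m ((\bigcup_n A n `\` \bigcup_(k < N) A k) `|`
                         \bigcup_n (A n `\` F n)))).
  apply: le_measure; rewrite ?inE.
  - by apply: measurableD => //; rewrite bigcup_mkord; exact: bigsetU_measurable.
  - by apply: measurableU => //; exact: measurableD.
  - move=> x [[j _ Ajx] nFx].
    case: (pselect ((\bigcup_(k < N) A k) x)) => [[k /= kN Akx]|nAx].
      by right; exists k => //; split => // Fkx; apply: nFx; exists k.
    by left; split => //; exists j.
apply: le_trans (measureU2 _ (measurableD mUA mAN) mUD) _.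
rewrite [e]splitr EFinD; apply: leeD => //.
apply: (measure_le_geometric_cover (G := fun n => A n `\` F n) (ltW e20)) => //.
by move=> n; case: (hF n).
Qed.

Lemma inner_regular_bigcap (A : nat -> set (BX c)) :
  (forall n, measurable (A n)) -> (forall n, inner_regular (A n)) ->
  inner_regular (\bigcap_n A n).
Proof.
move=> mA iA e e0.
have /choice[F hF] : forall n, exists F, [/\ c_closed c F, F `<=` A n &
    (m (A n `\` F) <= (e / (2 ^ n.+1)%:R)%:E)%E].
  by move=> n; apply: iA; rewrite divr_gt0 // ltr0n expn_gt0.
have mF n : measurable (F n : set (BX c)).
  by apply: c_closed_measurable; case: (hF n).
exists (\bigcap_n F n); split.
- by apply: c_closed_bigcap => n; case: (hF n).
- by move=> x Fx n _; case: (hF n) => _ /(_ x (Fx n I)).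
apply: (measure_le_geometric_cover (G := fun n => A n `\` F n) (ltW e0)).
- by apply: measurableD; exact: bigcapT_measurable.
- by move=> n; exact: measurableD.
- move=> x [Ax /= /existsNP[n /not_implyP[_ nFx]]].
  by exists n => //; split => //; apply: Ax.
- by move=> n; case: (hF n).
Qed.

Lemma measurable_inner_regular (A : set (BX c)) : measurable A -> inner_regular A.
Proof.
pose regular := [set B : set (BX c) | [/\ measurable B, inner_regular B &
  inner_regular (~` B)]].
suff : <<s c_open c >> `<=` regular by move=> /[apply] -[].
apply: smallest_sub.
  split.
  - split => //; first exact/inner_regular_closed/c_closed0.
    by rewrite setC0; exact/inner_regular_closed/c_closedT.
  - move=> B [mB iB iCB]; rewrite setTD; split => //; first exact: measurableC.
    by rewrite setCK.
  - move=> B rB; have mB n : measurable (B n : set (BX c)) by case: (rB n).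
    split; first exact: bigcupT_measurable.
    + by apply: inner_regular_bigcup => // n; case: (rB n).
    + rewrite setC_bigcup; apply: inner_regular_bigcap.
        by move=> n; exact: measurableC.
      by move=> n; case: (rB n).
move=> U oU; split; first exact: c_open_measurable.
- exact: inner_regular_open.
- by apply: inner_regular_closed; rewrite /c_closed setCK.
Qed.

End inner_regularity.

Section diagonal_plan.
Context {R : realType} {X : pointedType} (c : X -> X -> R).
Variable rho : {measure set BX c -> \bar R}.

Let diag (x : BX c) : BXX c := (x, x).
Let mdiag : measurable_fun setT diag := measurable_diag_BX (c := c).

Definition diag_plan := pushforward rho diag.

Let diag_plan0 : diag_plan set0 = 0%E. Proof. exact: measure0. Qed.
Let diag_plan_ge0 B : (0 <= diag_plan B)%E. Proof. exact: measure_ge0. Qed.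
Let diag_plan_sigma_additive : semi_sigma_additive diag_plan.
Proof. exact: measure_semi_sigma_additive. Qed.

(* The library's measure instance on [pushforward] takes the measurability of
   the map as an argument, which unification cannot supply. *)
HB.instance Definition _ := isMeasure.Build _ _ _ diag_plan
  diag_plan0 diag_plan_ge0 diag_plan_sigma_additive.

Lemma diag_plan_fst (A : set (BX c)) :
  (diag_plan : {measure set BXX c -> \bar R}) (A `*` setT) = rho A.
Proof.
rewrite /diag_plan /pushforward; congr (rho _).
by apply/seteqP; split=> x //= [].
Qed.

Lemma diag_plan_snd (A : set (BX c)) :
  (diag_plan : {measure set BXX c -> \bar R}) (setT `*` A) = rho A.
Proof.
rewrite /diag_plan /pushforward; congr (rho _).
by apply/seteqP; split=> x //= [].
Qed.

Lemma diag_plan_setT :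
  (diag_plan : {measure set BXX c -> \bar R}) setT = rho setT.
Proof. by rewrite /= /diag_plan /pushforward preimage_setT. Qed.

Lemma diag_plan_cost0 (p : R) : is_metric c -> p != 0 ->
  (\int[diag_plan]_z ((c z.1 z.2) `^ p)%:E = 0)%E.
Proof.
move=> hc p0; rewrite ge0_integral_pushforward //.
- by apply: integral0_eq => x _ /=; rewrite (metric_xx hc) powR0.
- exact: measurable_cost_powR.
- by move=> z _; rewrite lee_fin powR_ge0.
Qed.

End diagonal_plan.

Section hahn_plan.
Context {R : realType} {X : pointedType} (c : X -> X -> R).
Variables mu nu : {finite_measure set BX c -> \bar R}.

Definition measure_diff_charge : {charge set BX c -> \bar R} :=
  cadd (charge_of_finite_measure mu) (copp (charge_of_finite_measure nu)).

Variables (P N : set (BX c)) (hPN : hahn_decomposition measure_diff_charge P N).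

Let mP : measurable P. Proof. by case: hPN => -[]. Qed.
Let mN : measurable N. Proof. by case: hPN => _ []. Qed.

Let rho : {measure set BX c -> \bar R} := measure_add (mrestr nu mP) (mrestr mu mN).

Let rhoE (A : set (BX c)) : rho A = (nu (A `&` P) + mu (A `&` N))%E.
Proof. exact: measure_addE. Qed.

Definition hahn_plan := diag_plan rho.

Let hahn_restr_le (A : set (BX c)) : measurable A ->
  (nu (A `&` P) <= mu (A `&` P))%E /\ (mu (A `&` N) <= nu (A `&` N))%E.
Proof.
move=> mA; case: hPN => -[_ posP] [_ negN] _ _; split.
- have : (0 <= mu (A `&` P) - nu (A `&` P))%E.
    by apply: posP; [exact: measurableI | exact: subIsetr].
  by rewrite sube_ge0 // fin_num_measure //; exact: measurableI.
- have : (mu (A `&` N) - nu (A `&` N) <= 0)%E.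
    by apply: negN; [exact: measurableI | exact: subIsetr].
  by rewrite sube_le0.
Qed.

Let measure_split (m : {measure set BX c -> \bar R}) (A : set (BX c)) :
  measurable A -> m A = (m (A `&` P) + m (A `&` N))%E.
Proof.
move=> mA; case: hPN => _ _ PN PN0.
rewrite -measureU; [|exact: measurableI|exact: measurableI|].
- by rewrite -setIUr PN setIT.
- by rewrite setIACA setIid PN0 setI0.
Qed.

Lemma hahn_plan_partial :
  partial_plan c mu nu (fine (nu P) + fine (mu N)) hahn_plan.
Proof.
rewrite /hahn_plan; split.
- by rewrite diag_plan_setT rhoE !setTI EFinD !fineK ?fin_num_measure.
- move=> A mA; rewrite diag_plan_fst rhoE (measure_split mu mA).
  by apply: leeD => //; have [] := hahn_restr_le mA.
- move=> A mA; rewrite diag_plan_snd rhoE (measure_split nu mA).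
  by apply: leeD => //; have [] := hahn_restr_le mA.
Qed.

End hahn_plan.

Section partial_transport.
Context {R : realType} {X : pointedType} (c : X -> X -> R).
Variables (mu nu : {measure set BX c -> \bar R}) (p : R).

Lemma Wpa_le_wp (alpha : R) (gam : {measure set BXX c -> \bar R}) :
  partial_plan c mu nu alpha gam -> (Wpa c p alpha mu nu <= wp c p gam)%E.
Proof. by move=> pg; apply: ereal_inf_lbound; exists gam. Qed.

Lemma wp_eq0 (gam : {measure set BXX c -> \bar R}) : p != 0 ->
  (\int[gam]_z ((c z.1 z.2) `^ p)%:E = 0)%E -> wp c p gam = 0%E.
Proof. by move=> p0 int0; rewrite /wp int0 poweR0r // invr_neq0. Qed.

Lemma Wpa_le0_small_cost (alpha : R) : 0 < p ->
  (Wpa c p alpha mu nu <= 0)%E -> forall d : R, 0 < d ->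
  exists2 gam, partial_plan c mu nu alpha gam &
    (\int[gam]_z ((c z.1 z.2) `^ p)%:E <= d%:E)%E.
Proof.
move=> p0 hW d d0; have pV0 : 0 < p^-1 by rewrite invr_gt0.
have /ereal_inf_lt[_ [gam pg <-] hlt] : (Wpa c p alpha mu nu < (d `^ p^-1)%:E)%E.
  by apply: le_lt_trans hW _; rewrite lte_fin powR_gt0.
exists gam => //; move: hlt; rewrite /wp.
have : (0 <= \int[gam]_z ((c z.1 z.2) `^ p)%:E)%E.
  by apply: integral_ge0 => z _; rewrite lee_fin powR_ge0.
case: (\int[gam]_z _)%E => [i| |] //; last first.
  by move=> _; rewrite poweRyr ?ltNge ?leey // gt_eqF.
rewrite lee_fin poweR_EFin lte_fin lee_fin => i0 hi.
rewrite leNgt; apply/negP => di.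
have := ge0_ler_powR (ltW pV0) (x := d) (y := i).
rewrite !nnegrE (ltW d0) i0 (ltW di) => /(_ isT isT isT).
by rewrite leNgt hi.
Qed.

Hypothesis hc : is_metric c.

Lemma cost_markov (gam : {measure set BXX c -> \bar R}) (t : R) : 0 < p -> 0 < t ->
  ((t `^ p)%:E * gam [set z | (t <= c z.1 z.2)%R] <=
   \int[gam]_z ((c z.1 z.2) `^ p)%:E)%E.
Proof.
move=> p0 t0; have tp0 : 0 < t `^ p by rewrite powR_gt0.
have := le_integral_abse gam measurableT (measurable_cost_powR hc p) tp0.
under eq_integral do rewrite gee0_abs ?lee_fin ?powR_ge0 //.
apply: le_trans; apply: lee_wpmul2l; first by rewrite lee_fin ltW.
apply: le_measure; rewrite ?inE.
- exact: measurable_cost_ge.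
- apply: emeasurable_fun_c_infty => //.
  by apply: measurableT_comp => //; exact: measurable_cost_powR.
move=> z /= tz; split => //; rewrite ger0_norm ?powR_ge0 // lee_fin.
by apply: ge0_ler_powR => //; rewrite ?nnegrE ?(metric_ge0 hc) // ltW.
Qed.

Lemma partial_plan_thicken_cover (alpha : R) (gam : {measure set BXX c -> \bar R})
    (F : set X) (t : R) :
  partial_plan c mu nu alpha gam -> measurable (F : set (BX c)) ->
  (alpha%:E <= mu (~` F) + nu (c_thicken c F t) +
               gam [set z | (t <= c z.1 z.2)%R])%E.
Proof.
move=> [gT gfst gsnd] mF.
have mCF : measurable (~` F : set (BX c)) by exact: measurableC.
have mFt : measurable (c_thicken c F t : set (BX c)).
  by apply: c_open_measurable; exact: c_thicken_open.
have m1 := measurable_setXT_BX mCF; have m2 := measurable_setTX_BX mFt.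
have mK := measurable_cost_ge hc t.
rewrite -gT; apply: (@le_trans _ _
  (gam ((~` F `*` setT `|` setT `*` c_thicken c F t) `|` [set z | t <= c z.1 z.2]))).
  apply: le_measure; rewrite ?inE //; first by apply: measurableU => //; exact: measurableU.
  move=> [x y] _; case: (pselect (F x)) => Fx; last by left; left.
  case: (ltP (c x y) t) => xy; last by right.
  by left; right; split => //=; exists x.
apply: le_trans (@measureU2 _ _ _ gam _ _ (measurableU _ _ m1 m2) mK) _.
apply: leeD => //; apply: le_trans (@measureU2 _ _ _ gam _ _ m1 m2) _.
by apply: leeD; [exact: gfst | exact: gsnd].
Qed.

End partial_transport.

Section probability_bounds.
Context {R : realType} {X : pointedType} (c : X -> X -> R) (hc : is_metric c).
Variables (mu nu : probability (BX c) R) (p : R).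
Hypothesis p0 : 0 < p.

Lemma Wpa_le0_measureB_le (eps : R) (A : set (BX c)) :
  (Wpa c p (1 - eps) mu nu <= 0)%E -> measurable A ->
  fine (mu A) - fine (nu A) <= eps.
Proof.
move=> hW mA; apply/ler_addgt0Pr => e e0; have e3 : 0 < e / 3 by rewrite divr_gt0.
have [F [cF FA muAF]] := measurable_inner_regular hc mu mA e3.
have mF : measurable (F : set (BX c)) := c_closed_measurable cF.
have [n nuFt] := c_thicken_setD_small hc nu cF e3.
set t : R := n.+1%:R^-1; set Ft := c_thicken c F t.
have t0 : 0 < t by rewrite invr_gt0.
have mFt : measurable (Ft : set (BX c)).
  by apply: c_open_measurable; exact: c_thicken_open.
have [gam pg cost] := Wpa_le0_small_cost p0 hW (mulr_gt0 e3 (powR_gt0 p t0)).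
have far : (gam [set z | (t <= c z.1 z.2)%R] <= (e / 3)%:E)%E.
  rewrite -(@lee_pmul2l _ (t `^ p)%:E) ?lte_fin ?powR_gt0 // -EFinM mulrC.
  exact: le_trans (cost_markov hc gam p0 t0) cost.
have cover := partial_plan_thicken_cover hc t pg mF.
have mCF : measurable (~` F : set (BX c)) by exact: measurableC.
have : ((1 - eps)%:E <= (fine (mu (~` F)) + fine (nu Ft) + e / 3)%:E)%E.
  rewrite !EFinD !fineK ?fin_num_measure //.
  by apply: le_trans cover _; exact: leeD2l far.
rewrite lee_fin fine_probabilityC // (fine_measure_setD nu mFt mF (c_thicken_sub hc t0)).
have := fine_measure_setD mu mA mF FA; have := fine_measure_setD nu mA mF FA.
have := fine_ge0 (measure_ge0 nu (A `\` F)).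
have : fine (mu (A `\` F)) <= e / 3.
  by rewrite -lee_fin fineK ?fin_num_measure //; exact: measurableD.
have : fine (nu (Ft `\` F)) <= e / 3.
  by rewrite -lee_fin fineK ?fin_num_measure //; exact: measurableD.
lra.
Qed.

Lemma Wpa_hahn_le0 (P N : set (BX c)) :
  hahn_decomposition (measure_diff_charge mu nu) P N ->
  (Wpa c p (1 - (fine (mu P) - fine (nu P))) mu nu <= 0)%E.
Proof.
move=> hPN; have [[mP _] _ PN PN0] := hPN.
have NCP : N = ~` P.
  apply/seteqP; split; first by apply/disjoints_subset; rewrite setIC.
  by move=> x nPx; have [] : (P `|` N) x by rewrite PN.
have -> : 1 - (fine (mu P) - fine (nu P)) = fine (nu P) + fine (mu N).
  by rewrite NCP fine_probabilityC //; lra.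
apply: le_trans (Wpa_le_wp _ (hahn_plan_partial hPN)) _.
by rewrite wp_eq0 ?lt0r_neq0 // diag_plan_cost0 ?lt0r_neq0.
Qed.

End probability_bounds.

Unset Implicit Arguments. Set Strict Implicit. Set Printing Implicit Defensive.

Theorem lemma4p2 (R : realType) (X : pointedType) (c : X -> X -> R)
  (hc : is_metric c) (hdiam : forall x y, c x y <= 1)
  (mu nu : probability (BX c) R) (p : R) (hp : 1 <= p) :
  RPW c p 0 mu nu = TV c mu nu.
Proof.
have p0 : 0 < p by exact: lt_le_trans ltr01 hp.
have [P [N hPN]] := Hahn_decomposition (measure_diff_charge mu nu).
have [[mP posP] _ _ _] := hPN.
set eps0 := fine (mu P) - fine (nu P).
set S := [set eps : R | 0 <= eps <= 1 /\ (Wpa c p (1 - eps) mu nu <= (0 * eps)%:E)%E].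
set T := [set `|fine (mu A) - fine (nu A)| | A in (@measurable _ (BX c))].
have ubT eps : S eps -> ubound T eps.
  move=> [_ hW] _ [A mA <-]; rewrite mul0r in hW; rewrite ler_norml.
  rewrite (Wpa_le0_measureB_le hc p0 hW mA) andbT.
  have := Wpa_le0_measureB_le hc p0 hW (measurableC mA).
  by rewrite !fine_probabilityC //; lra.
have eps0_ge0 : 0 <= eps0.
  have : (0 <= mu P - nu P)%E := posP P mP (@subset_refl _ P).
  by rewrite /eps0 -fineB ?fin_num_measure //; exact: fine_ge0.
have eps0S : S eps0.
  split; last by rewrite mul0r; apply: le_trans (Wpa_hahn_le0 hc p0 hPN) _.
  have := fine_probability_le1 mu mP; have := fine_ge0 (measure_ge0 nu P).
  by rewrite eps0_ge0 /= /eps0; lra.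
have eps0T : T eps0 by exists P => //; rewrite ger0_norm.
rewrite /RPW /TV -/S -/T; apply/eqP; rewrite eq_le; apply/andP; split.
- apply: le_trans (ge_inf _ eps0S) _; first by exists 0 => x [/andP[]].
  by apply: ub_le_sup => //; exists eps0; exact: ubT.
- apply: lb_le_inf; first by exists eps0.
  by move=> eps /ubT; apply: ge_sup; exists eps0.
Qed.
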